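(* Let $R$ be a pmp equivalence relation and $F\subseteq\llbracket R\rrbracket$ finite. Then $s(F)=\lim_{\varepsilon\to0}s_\varepsilon(F)$, and likewise $\underline s(F)=\lim_{\varepsilon\to0}\underline s_\varepsilon(F)$ and $s_\omega(F)=\lim_{\varepsilon\to0}s_{\omega,\varepsilon}(F)$ for every nonprincipal ultrafilter $\omega$.
   Context: Let $(X,\mu)$ be a standard probability space and $R$ a pmp countable Borel equivalence relation. $\llbracket R\rrbracket$ denotes the set of partial measure-preserving Borel bijections between Borel subsets of $X$ with graph contained in $R$, modulo null sets, with composition, inverses and identity $1$. Pairwise orthogonal elements (pairwise disjoint domains and ranges) have a sum; $\mathbf\Sigma F$ is the set of finite sums of pairwise orthogonal elements of $F$; $F_\pm=F\cup\{s^{-1}:s\in F\}\cup\{1\}$; $F_\pm^n$ the products of $n$ elements of $F_\pm$. $|s-t|=\mu\{x\in\operatorname{dom}s\cup\operatorname{dom}t:s(x)\neq t(x)\}$ (with $s(x)\neq t(x)$ on $\operatorname{dom}s\triangle\operatorname{dom}t$), $\tau(s)=\mu\{x\in\operatorname{dom}s:s(x)=x\}$. $\llbracket d\rrbracket$: partial permutations of $\{1,\dots,d\}$ with uniform measure, same distance, trace $\operatorname{tr}$. ${\rm SA}(F,n,\delta,d)$ is the set of maps $\varphi:\llbracket R\rrbracket\to\llbracket d\rrbracket$ with $\varphi(1)=1$ such that $|\varphi(st)-\varphi(s)\varphi(t)|<\delta$ for all $s,t\in\mathbf\Sigma F_\pm^n$ with $st\in\mathbf\Sigma F_\pm^n$,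 and $|\operatorname{tr}(\varphi(s))-\tau(s)|<\delta$ for all $s\in\mathbf\Sigma F_\pm^n$. For maps $\varphi,\psi$ put $|\varphi-\psi|_F=\max_{s\in F}|\varphi(s)-\psi(s)|$, and for $\varepsilon\ge0$ let $N_\varepsilon(S)$ be the minimal number of closed $|\cdot|_F$-balls of radius $\varepsilon$ covering a set $S$ of maps. Define $s_\varepsilon(F)=\inf_n\inf_{\delta>0}\limsup_{d\to\infty}\frac{1}{d\log d}\log N_\varepsilon({\rm SA}(F,n,\delta,d))$ ($\log0=-\infty$); $\underline s_\varepsilon(F)$ uses $\liminf_d$, $s_{\omega,\varepsilon}(F)$ uses $\lim_{d\to\omega}$; $s(F),\underline s(F),s_\omega(F)$ are the case $\varepsilon=0$ (where $N_0$ counts distinct restrictions to $F$). *)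

From HB Require Import structures.
From mathcomp Require Import all_boot all_order all_algebra.
From mathcomp Require Import all_classical all_reals all_analysis.

Set Implicit Arguments.
Unset Strict Implicit.
Unset Printing Implicit Defensive.

Import Order.TTheory GRing.Theory Num.Theory.
Import numFieldNormedType.Exports.
Local Open Scope classical_set_scope.
Local Open Scope ring_scope.

(* Standard Borel spaces: (by Kuratowski's theorem) measurable spaces that    *)
(* are Borel isomorphic to a Borel subset of the real line.                  *)
Definition std_borel (R : realType) (d : measure_display)
    (T : measurableType d) : Prop :=
  exists (A : set R) (f : T -> R),
    measurable A /\ measurable_fun setT f /\
    set_inj setT f /\ f @` setT = A /\
    (forall B : set T, measurable B -> measurable (f @` B)).

Definition cber (d : measure_display) (T : measurableType d)
    (E : T -> T -> Prop) : Prop :=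
  [/\ (forall x, E x x), (forall x y, E x y -> E y x),
      (forall x y z, E x y -> E y z -> E x z),
      measurable [set p : T * T | E p.1 p.2] &
      (forall x, countable [set y | E x y])].

Definition parmap (T : Type) := (set T * (T -> T))%type.
Definition pdom T (s : parmap T) : set T := s.1.
Definition pfun T (s : parmap T) : T -> T := s.2.
Definition pran T (s : parmap T) : set T := pfun s @` pdom s.

Definition borel_pbij (d : measure_display) (T : measurableType d)
    (E : T -> T -> Prop) (s : parmap T) : Prop :=
  [/\ measurable (pdom s), measurable_fun (pdom s) (pfun s),
      set_inj (pdom s) (pfun s),
      (forall B, measurable B -> B `<=` pdom s -> measurable (pfun s @` B)) &
      (forall x, pdom s x -> E x (pfun s x))].

Definition pmp (R : realType) (d : measure_display) (T : measurableType d)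
    (mu : probability T R) (E : T -> T -> Prop) : Prop :=
  forall s, borel_pbij E s -> mu (pran s) = mu (pdom s).

Definition in_pgrp (R : realType) (d : measure_display) (T : measurableType d)
    (mu : probability T R) (E : T -> T -> Prop) (s : parmap T) : Prop :=
  borel_pbij E s /\
  (forall B, measurable B -> B `<=` pdom s -> mu (pfun s @` B) = mu B).

Section Pseudogroup.
Variables (R : realType) (d : measure_display) (T : measurableType d).
Variable mu : probability T R.

Definition pone : parmap T := (setT, id).
Arguments pone : clear implicits.
Definition pcomp (s t : parmap T) : parmap T :=
  ([set x | pdom t x /\ pdom s (pfun t x)], pfun s \o pfun t).
Definition pinvf (s : parmap T) : T -> T := fun y =>
  match pselect (exists x, pdom s x /\ pfun s x = y) with
  | left e => projT1 (cid e)
  | right _ => y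
  end.
Definition pinverse (s : parmap T) : parmap T := (pran s, pinvf s).
Definition psum2 (s t : parmap T) : parmap T :=
  (pdom s `|` pdom t,
   fun x => if x \in pdom s then pfun s x else pfun t x).
Definition pzero : parmap T := (set0, id).
Definition psum (l : seq (parmap T)) : parmap T := foldr psum2 pzero l.
Definition pprod (l : seq (parmap T)) : parmap T := foldr pcomp pone l.

Definition pdist (s t : parmap T) : \bar R :=
  mu [set x | (pdom s x \/ pdom t x) /\
              ~ (pdom s x /\ pdom t x /\ pfun s x = pfun t x)].
Definition ptau (s : parmap T) : \bar R :=
  mu [set x | pdom s x /\ pfun s x = x].

Definition pequiv (s t : parmap T) : Prop := pdist s t = 0%E.

Definition porth (s t : parmap T) : Prop :=
  mu (pdom s `&` pdom t) = 0%E /\ mu (pran s `&` pran t) = 0%E.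

Definition pairwise_orth (l : seq (parmap T)) : Prop :=
  forall i j, (i < size l)%N -> (j < size l)%N -> i <> j ->
    porth (nth pzero l i) (nth pzero l j).

Definition in_Fpm (F : seq (parmap T)) (x : parmap T) : Prop :=
  pequiv x pone \/ exists2 s, s \in F & (pequiv x s \/ pequiv x (pinverse s)).

Definition in_Fpow (F : seq (parmap T)) (n : nat) (x : parmap T) : Prop :=
  exists l : seq (parmap T), size l = n /\ (forall y, y \in l -> in_Fpm F y) /\
    pequiv x (pprod l).

Definition in_SigFpow (E : T -> T -> Prop) (F : seq (parmap T)) (n : nat)
    (x : parmap T) : Prop :=
  in_pgrp mu E x /\
  exists l : seq (parmap T),
    (forall y, y \in l -> in_pgrp mu E y /\ in_Fpow F n y) /\
    pairwise_orth l /\ pequiv x (psum l).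
End Pseudogroup.

(* Partial permutations of {0,...,d-1} (i.e. of {1,...,d}).                 *)
Definition ppd (n : nat) := {ffun 'I_n -> option 'I_n}.
Definition ppd_inj n (p : ppd n) : bool :=
  [forall i, forall j, (p i != None) && (p i == p j) ==> (i == j)].
Definition ppd_one n : ppd n := [ffun i => Some i].
Definition ppd_comp n (p q : ppd n) : ppd n :=
  [ffun i => if q i is Some j then p j else None].
Definition ppd_dist (R : realType) n (p q : ppd n) : R :=
  #|[set i | p i != q i]|%:R / n%:R.
Definition ppd_tr (R : realType) n (p : ppd n) : R :=
  #|[set i | p i == Some i]|%:R / n%:R.

Section SoficEntropy.
Variables (R : realType) (dd : measure_display) (T : measurableType dd).
Variables (mu : probability T R) (E : T -> T -> Prop).

Definition smap (n : nat) := parmap T -> ppd n.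

(* maps [[E]] -> [[n]]: well defined on classes modulo null sets *)
Definition is_smap n (phi : smap n) : Prop :=
  (forall s, ppd_inj (phi s)) /\
  (forall s t, in_pgrp mu E s -> in_pgrp mu E t -> pequiv mu s t ->
     phi s = phi t).

Definition distF (F : seq (parmap T)) n (phi psi : smap n) : R :=
  \big[Num.max/0]_(s <- F) ppd_dist R (phi s) (psi s).

Definition SA (F : seq (parmap T)) (m : nat) (delta : R) (n : nat)
    : set (smap n) :=
  [set phi | is_smap phi /\ phi (@pone _ T) = ppd_one n /\
    (forall s t, in_SigFpow mu E F m s -> in_SigFpow mu E F m t ->
       in_SigFpow mu E F m (pcomp s t) ->
       ppd_dist R (phi (pcomp s t)) (ppd_comp (phi s) (phi t)) < delta) /\
    (forall s, in_SigFpow mu E F m s ->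
       (`| (ppd_tr R (phi s))%:E - ptau mu s | < delta%:E)%E)].

Definition covers (F : seq (parmap T)) n (S : set (smap n)) (eps : R)
    (k : nat) : Prop :=
  exists c : seq (smap n), size c = k /\ (forall psi, psi \in c -> is_smap psi) /\
    forall phi, S phi -> exists2 psi, psi \in c & distF F phi psi <= eps.

Definition Ncov (F : seq (parmap T)) n (S : set (smap n)) (eps : R) : \bar R :=
  ereal_inf [set (k%:R)%:E | k in [set k | covers F S eps k]].

Definition elog (x : \bar R) : \bar R :=
  match x with
  | r%:E => if r == 0 then -oo%E else (ln r)%:E
  | _ => x
  end.

Definition sterm (F : seq (parmap T)) (m : nat) (delta eps : R) (n : nat)
    : \bar R :=
  ((n%:R * ln (n%:R : R))^-1)%:E * elog (Ncov F (@SA F m delta n) eps).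

Definition s_eps (F : seq (parmap T)) (eps : R) : \bar R :=
  ereal_inf [set ereal_inf [set limn_esup (sterm F m delta eps)
                           | delta in [set delta : R | 0 < delta]]
            | m in [set: nat]].
Definition lower_s_eps (F : seq (parmap T)) (eps : R) : \bar R :=
  ereal_inf [set ereal_inf [set limn_einf (sterm F m delta eps)
                           | delta in [set delta : R | 0 < delta]]
            | m in [set: nat]].
Definition s_omega_eps (om : set_system nat) (F : seq (parmap T)) (eps : R)
    : \bar R :=
  ereal_inf [set ereal_inf [set lim (sterm F m delta eps @ om)
                           | delta in [set delta : R | 0 < delta]]
            | m in [set: nat]].

Definition s_ent F := s_eps F 0.
Definition lower_s_ent F := lower_s_eps F 0.
Definition s_omega_ent om F := s_omega_eps om F 0.
End SoficEntropy.

Definition nonprincipal (om : set_system nat) : Prop :=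
  forall k : nat, ~ om [set k].

(* Shrinking the radius only enlarges covering numbers, so s_eps <= s.  Conversely,
   a partial permutation of {1..n} at distance at most eps from a fixed one is
   determined by at most eps n pairs (i, q i), so a closed |.|_F-ball of radius eps
   contains at most (n^2 + n + 1)^(eps n |F|) distinct restrictions to F.  Hence
   N_0 <= N_eps (n^2 + n + 1)^(eps n |F|), and after normalising by n log n,
   s_eps <= s <= s_eps + 3 |F| eps at the level of every term of the sequences.
   This two-sided bound survives limsup, liminf, ultralimits and infima. *)

From HB Require Import structures.
From mathcomp Require Import all_boot all_order all_algebra.
From mathcomp Require Import all_classical all_reals all_analysis.
From mathcomp Require Import ring lra zify.
Import Order.TTheory GRing.Theory Num.Theory.
Import numFieldNormedType.Exports.
Local Open Scope classical_set_scope.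
Local Open Scope ring_scope.
Set Implicit Arguments.
Unset Strict Implicit.
Unset Printing Implicit Defensive.

Section UpToBounds.
Variable R : realType.
Local Open Scope ereal_scope.

Definition le_upto (c : R) (x y : \bar R) : Prop := x <= y /\ y <= x + c%:E.

Lemma le_upto_ereal_inf (I : Type) (P : set I) (a b : I -> \bar R) (c : R) :
  (forall i, le_upto c (a i) (b i)) ->
  le_upto c (ereal_inf [set a i | i in P]) (ereal_inf [set b i | i in P]).
Proof.
move=> ab; split.
  apply: le_ereal_inf_tmp => _ [i Pi <-].
  by apply: le_trans _ (ab i).1; apply: ereal_inf_lbound; exists i.
rewrite -leeBlDr //; apply: le_ereal_inf_tmp => _ [i Pi <-].
by rewrite leeBlDr //; apply: le_trans (ab i).2; apply: ereal_inf_lbound; exists i.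
Qed.

Lemma le_limn_esup (u v : (\bar R)^nat) :
  (forall n, u n <= v n) -> limn_esup u <= limn_esup v.
Proof.
move=> uv; rewrite !limn_esup_lim; apply: lee_lim; [exact: is_cvg_esups..|].
apply: nearW => n; apply: ge_ereal_sup => _ [k /= nk <-].
by apply: le_trans (uv k) _; apply: ereal_sup_ubound; exists k.
Qed.

Lemma le_limn_einf (u v : (\bar R)^nat) :
  (forall n, u n <= v n) -> limn_einf u <= limn_einf v.
Proof. by move=> uv; rewrite leeN2 le_limn_esup // => n; rewrite leeN2. Qed.

Lemma limn_esup_shift (u : (\bar R)^nat) (c : R) :
  limn_esup (fun n => u n + c%:E) = limn_esup u + c%:E.
Proof.
rewrite -[LHS]oppeK -limn_einfN.
have -> : (-%E \o (fun n => u n + c%:E)) = (fun n => (- c)%:E + (- u n)).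
  apply: funext => n /=; rewrite addeC oppeD //; exact: fin_num_adde_defl.
rewrite (limn_einf_shift (-%E \o u)) // limn_einfN.
rewrite oppeD; first by rewrite EFinN !oppeK addeC.
exact: fin_num_adde_defr.
Qed.

Lemma le_upto_limn_esup (u v : (\bar R)^nat) (c : R) :
  (forall n, le_upto c (u n) (v n)) -> le_upto c (limn_esup u) (limn_esup v).
Proof.
move=> uv; split; first by apply: le_limn_esup => n; exact: (uv n).1.
by rewrite -limn_esup_shift; apply: le_limn_esup => n; exact: (uv n).2.
Qed.

Lemma le_upto_limn_einf (u v : (\bar R)^nat) (c : R) :
  (forall n, le_upto c (u n) (v n)) -> le_upto c (limn_einf u) (limn_einf v).
Proof.
move=> uv; split; first by apply: le_limn_einf => n; exact: (uv n).1.
rewrite addeC -limn_einf_shift //; apply: le_limn_einf => n.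
by rewrite addeC; exact: (uv n).2.
Qed.

Lemma cvg_at_right0_le_upto (G : R -> \bar R) (g : \bar R) (C : R) : (0 <= C)%R ->
  (forall eps, (0 < eps)%R -> le_upto (C * eps) (G eps) g) ->
  G eps @[eps --> 0%R^'+] --> g.
Proof.
move=> C_ge0 G_upto; have near0 := @nbhs_right_gt R 0.
case: g G_upto => [r| |] G_upto.
- apply/fine_cvgP; split.
    by apply: filterS near0 => x /G_upto []; case: (G x).
  apply/cvgrPdist_lt => e e_gt0.
  have e'_gt0 : (0 < e / (C + 1))%R by apply: divr_gt0 => //; lra.
  apply: filterS (filterI near0 (nbhs_right_lt e'_gt0)) => x [x_gt0 x_lt].
  have [] := G_upto x x_gt0; rewrite /=; case: (G x) => // s /=.
  rewrite lee_fin -EFinD lee_fin => le_sr le_rs.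
  have Cx_lt : (C * x < e)%R.
    apply: le_lt_trans (_ : C * (e / (C + 1)) < e)%R; first by rewrite ler_wpM2l // ltW.
    rewrite mulrA ltr_pdivrMr; last lra.
    by rewrite mulrDr mulr1 mulrC ltrDl.
  by rewrite ger0_norm; lra.
- apply/cvgeyPgt => A; apply: filterS near0 => x /G_upto [_].
  by case: (G x) => [s|_|//]; [rewrite leye_eq | rewrite ltry].
- apply/cvgeNyPle => A; apply: filterS near0 => x /G_upto [+ _].
  by case: (G x) => [s|//|_]; [rewrite leeNy_eq | rewrite leNye].
Qed.
End UpToBounds.

Section UltraLimit.
Variable R : realType.
Local Open Scope ereal_scope.

(* The ultralimit is [inf_{A in om} sup f(A)]: elements below it are exceeded
   on a set of [om] because [om] is ultra, elements above it are exceeded by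
   the supremum over some set of [om]. *)
Lemma ultra_ereal_cvg (I : Type) (om : set_system I) (f : I -> \bar R) :
  UltraFilter om -> cvg (f @ om).
Proof.
move=> omU; set l := ereal_inf [set ereal_sup (f @` A) | A in om].
have l_le_sup A : om A -> l <= ereal_sup (f @` A).
  by move=> omA; apply: ereal_inf_lbound; exists A.
have near_lt x : l < x -> om [set i | f i < x].
  move=> /ereal_inf_lt [_ [A omA <-]] supx.
  apply: filterS omA => i Ai /=; apply: le_lt_trans supx.
  by apply: ereal_sup_ubound; exists i.
have near_gt x : x < l -> om [set i | x < f i].
  move=> xl; have [//|omC] := in_ultra_setVsetC [set i | x < f i] omU.
  suff : l <= x by rewrite leNgt xl.
  apply: le_trans (l_le_sup _ omC) _; apply: ge_ereal_sup => _ [i /= fi_le <-].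
  by rewrite leNgt; apply/negP.
apply/cvg_ex; exists l; move: l_le_sup near_lt near_gt.
case: l => [r| |] _ near_lt near_gt.
- have near_ball e : (0 < e)%R -> om [set i | (r - e)%:E < f i < (r + e)%:E].
    move=> e0; apply: filterS (filterI (near_gt (r - e)%:E _) (near_lt (r + e)%:E _)).
    + by move=> i [/= -> ->].
    + by rewrite lte_fin ltrBlDr ltrDl.
    + by rewrite lte_fin ltrDl.
  apply/fine_cvgP; split.
    apply: filterS (near_ball 1%R ltr01) => i /andP[lt_fi lt_if].
    by rewrite fin_numElt (lt_trans (ltNyr _) lt_fi) (lt_trans lt_if (ltry _)).
  apply/cvgrPdist_lt => e e0; apply: filterS (near_ball e e0) => i /=.
  case: (f i) => [s /andP[]|/andP[_]|/andP[]].
  + by rewrite !lte_fin /= ltr_norml => h1 h2; apply/andP; split; lra.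
  + by move=> /ltW; rewrite leye_eq.
  + by move=> /ltW; rewrite leeNy_eq.
- by apply/cvgeyPgt => A; apply: near_gt; rewrite ltry.
- by apply/cvgeNyPle => A; apply: filterS (near_lt A%:E (ltNyr A)) => i /= /ltW.
Qed.

Lemma le_upto_ultra_lim (om : set_system nat) (omU : UltraFilter om)
    (u v : (\bar R)^nat) (c : R) :
  (forall i, le_upto c (u i) (v i)) -> le_upto c (lim (u @ om)) (lim (v @ om)).
Proof.
move=> uv; split.
  apply: lee_lim; [exact: ultra_ereal_cvg.. | apply: nearW => i; exact: (uv i).1].
have cvg_uc : (fun i => u i + c%:E) @ om --> lim (u @ om) + c%:E.
  apply: cvgeD; [exact: fin_num_adde_defl | exact: ultra_ereal_cvg | exact: cvg_cst].
rewrite -(cvg_lim _ cvg_uc) //; apply: lee_lim; [exact: ultra_ereal_cvg.. |].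
by apply: nearW => i; exact: (uv i).2.
Qed.
End UltraLimit.

Section ExtendedLog.
Variable R : realType.
Local Open Scope ereal_scope.

Lemma lee_elog (x y : \bar R) : 0 <= x -> x <= y -> elog x <= elog y.
Proof.
case: x => [r| |] //; case: y => [s| |] //; rewrite /elog; last first.
  by move=> _ _; case: eqVneq; rewrite ?leey ?leNye.
rewrite !lee_fin => r_ge0 le_rs.
have [_|r_neq0] := eqVneq r 0%R; first by rewrite leNye.
have r_gt0 : (0 < r)%R by rewrite lt_def r_neq0.
have s_gt0 : (0 < s)%R by exact: lt_le_trans le_rs.
by rewrite gt_eqF // lee_fin ler_ln.
Qed.

Lemma elogMr (x : \bar R) (M : R) : 0 <= x -> (0 < M)%R ->
  elog (x * M%:E) = elog x + (ln M)%:E.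
Proof.
case: x => [r| |] // r_ge0 M_gt0; last by rewrite gt0_mulye ?lte_fin.
rewrite lee_fin in r_ge0; rewrite -EFinM /elog.
have [->|r_neq0] := eqVneq r 0%R; first by rewrite mul0r eqxx.
have r_gt0 : (0 < r)%R by rewrite lt_def r_neq0.
by rewrite mulf_eq0 (negbTE r_neq0) gt_eqF //= lnM // -EFinD.
Qed.
End ExtendedLog.

Lemma card_ffun_family_le (I T : finType) (S : I -> {set T}) (M : nat) :
  (forall i, #|S i| <= M)%N ->
  (#|[set t : {ffun I -> T} | [forall i, t i \in S i]]%SET| <= M ^ #|I|)%N.
Proof.
move=> SM; have -> : #|[set t : {ffun I -> T} | [forall i, t i \in S i]]%SET| =
    #|(family (fun i => mem (S i)) : simpl_pred {ffun I -> T})|.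
  by apply: eq_card => t; rewrite inE.
rewrite card_family /image_mem foldrE big_map big_enum -prod_nat_const /=.
exact: leq_prod.
Qed.

Section PartialPermutations.
Variable n : nat.
Implicit Types p q : ppd n.

Definition ppd_diff p q : {set 'I_n} := [set i | p i != q i]%SET.

Lemma ppd_distE (R : realType) p q : ppd_dist R p q = #|ppd_diff p q|%:R / n%:R.
Proof.
congr (_%:R / _); apply: eq_card => i; rewrite inE.
by apply/idP/idP => [/set_mem|/mem_set].
Qed.

Lemma card_ppd_diff_le (R : realType) p q (eps : R) :
  ppd_dist R p q <= eps -> (#|ppd_diff p q| <= Num.truncn (eps * n%:R))%N.
Proof.
rewrite ppd_distE => le_eps; have [n0|n_gt0] := posnP n.
  by apply: leq_trans (max_card _) _; rewrite card_ord n0.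
rewrite ler_pdivrMr ?ltr0n // in le_eps.
by rewrite truncn_ge_nat // (le_trans _ le_eps).
Qed.

(* A partial permutation [q] differing from [p] in at most [L] points is
   determined by the list of the pairs [(i, q i)] at which they differ. *)
Definition ppd_code (L : nat) p q : {ffun 'I_L -> option ('I_n * option 'I_n)} :=
  [ffun j : 'I_L => nth None [seq Some (i, q i) | i <- enum (ppd_diff q p)] j].

Lemma ppd_code_agree L p q q' i :
  (#|ppd_diff q p| <= L)%N -> ppd_code L p q = ppd_code L p q' ->
  q i != p i -> q' i = q i.
Proof.
move=> le_L code_eq qi_ne.
set s := [seq Some (j, q j) | j <- enum (ppd_diff q p)].
have s_i : Some (i, q i) \in s by apply: map_f; rewrite mem_enum inE.
have idx_lt : (index (Some (i, q i)) s < L)%N.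
  by apply: leq_trans le_L; rewrite cardE -(size_map (fun j => Some (j, q j))) index_mem.
have := congr1 (fun c : {ffun _ -> _} => c (Ordinal idx_lt)) code_eq.
rewrite !ffunE /= nth_index // => /esym s'_at.
have : Some (i, q i) \in [seq Some (j, q' j) | j <- enum (ppd_diff q' p)].
  rewrite -s'_at mem_nth //; rewrite ltnNge; apply/negP => /(nth_default None).
  by rewrite s'_at.
by case/mapP => j _ [-> ->].
Qed.

Lemma card_ppd_near L p :
  (#|[set q | (#|ppd_diff q p| <= L)%N]%SET| <= (n * n.+1).+1 ^ L)%N.
Proof.
have code_inj : {in [set q | (#|ppd_diff q p| <= L)%N]%SET &, injective (ppd_code L p)}.
  move=> q q'; rewrite !inE => le_q le_q' code_eq; apply/ffunP => i.
  have [qi|qi] := eqVneq (q i) (p i); last exact/esym/(ppd_code_agree le_q).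
  have [q'i|q'i] := eqVneq (q' i) (p i); first by rewrite qi q'i.
  exact: (ppd_code_agree le_q' (esym code_eq)).
apply: leq_trans (leq_card_in _ _ code_inj) _.
by rewrite card_ffun card_option card_prod card_option !card_ord.
Qed.

End PartialPermutations.

Section Covering.
Variables (R : realType) (dd : measure_display) (T : measurableType dd).
Variables (mu : probability T R) (E : T -> T -> Prop) (F : seq (parmap T)).
Variable n : nat.
Implicit Types (S : set (smap T n)) (phi psi : smap T n).

Definition restrictF phi : {ffun 'I_(size F) -> ppd n} :=
  [ffun i : 'I_(size F) => phi (nth (@pone dd T) F i)].

Lemma ppd_dist_le_distF phi psi s :
  s \in F -> ppd_dist R (phi s) (psi s) <= distF R F phi psi.
Proof.
by move=> sF; apply: (le_bigmax_seq 0 _ xpredT (fun s => ppd_dist R (phi s) (psi s)) sF).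
Qed.

Lemma distF_le0 phi psi : restrictF phi = restrictF psi -> distF R F phi psi <= 0.
Proof.
move=> eq_phi_psi; rewrite /distF big_seq; apply: bigmax_le => // s sF.
have s_lt : (index s F < size F)%N by rewrite index_mem.
have := congr1 (fun f : {ffun _ -> _} => f (Ordinal s_lt)) eq_phi_psi.
rewrite !ffunE /= nth_index // => ->; rewrite ppd_distE.
have -> : #|ppd_diff (psi s) (psi s)| = 0%N by apply: eq_card0 => i; rewrite !inE eqxx.
by rewrite mul0r.
Qed.

Lemma covers_le_radius S eps1 eps2 k :
  eps1 <= eps2 -> covers mu E F S eps1 k -> covers mu E F S eps2 k.
Proof.
move=> le_eps [c [size_c [c_smap cover]]]; exists c; split=> //; split=> // phi.
by move=> /cover [psi c_psi le_psi]; exists psi => //; exact: le_trans le_eps.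
Qed.

Lemma Ncov_ge0 S eps : (0 <= Ncov mu E F S eps)%E.
Proof. by apply: le_ereal_inf_tmp => _ [k _ <-]; rewrite lee_fin ler0n. Qed.

Lemma Ncov_le_radius S eps1 eps2 :
  eps1 <= eps2 -> (Ncov mu E F S eps2 <= Ncov mu E F S eps1)%E.
Proof.
move=> le_eps; apply: ereal_inf_le_tmp => _ [k cov_k <-]; exists k => //.
exact: covers_le_radius cov_k.
Qed.

Definition restrict_rep S psi t : smap T n :=
  match pselect (exists phi, S phi /\ restrictF phi = t) with
  | left e => projT1 (cid e)
  | right _ => psi
  end.

Lemma restrict_repP S psi t :
  (exists phi, S phi /\ restrictF phi = t) ->
  S (restrict_rep S psi t) /\ restrictF (restrict_rep S psi t) = t.
Proof. by rewrite /restrict_rep; case: pselect => // e _; exact: projT2 (cid e). Qed.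

Lemma restrict_rep_smap S psi t :
  (forall phi, S phi -> is_smap mu E phi) -> is_smap mu E psi ->
  is_smap mu E (restrict_rep S psi t).
Proof.
move=> S_smap psi_smap; rewrite /restrict_rep; case: pselect => // e.
by apply: S_smap; case: (projT2 (cid e)).
Qed.

Definition restrict_ball psi eps : {set {ffun 'I_(size F) -> ppd n}} :=
  [set t : {ffun _ -> _} | [forall i, ppd_dist R (t i) (restrictF psi i) <= eps]]%SET.

Definition ball_count (eps : R) : nat :=
  ((n * n.+1).+1 ^ Num.truncn (eps * n%:R)) ^ size F.

Lemma card_restrict_ball psi eps : (#|restrict_ball psi eps| <= ball_count eps)%N.
Proof.
set L := Num.truncn (eps * n%:R).
pose near i := [set q | (#|ppd_diff q (restrictF psi i)| <= L)%N]%SET.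
have ball_sub : restrict_ball psi eps \subset
    [set t : {ffun 'I_(size F) -> ppd n} | [forall i, t i \in near i]]%SET.
  apply/fintype.subsetP => t; rewrite !inE => /forallP t_ball.
  by apply/forallP => i; rewrite inE; exact: card_ppd_diff_le.
apply: leq_trans (subset_leq_card ball_sub) _.
have near_card i : (#|near i| <= (n * n.+1).+1 ^ L)%N by exact: card_ppd_near.
by apply: leq_trans (card_ffun_family_le near_card) _; rewrite card_ord.
Qed.

(* Every [eps]-ball around a center [psi] meets at most [ball_count eps]
   restrictions to [F]; choosing one element of [S] for each of them refines an
   [eps]-covering into a [0]-covering. *)
Lemma covers_refine S eps K :
  (forall phi, S phi -> is_smap mu E phi) -> covers mu E F S eps K ->
  exists k, (k <= K * ball_count eps)%N /\ covers mu E F S 0 k.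
Proof.
move=> S_smap [c [size_c [c_smap cover]]].
pose c0 := flatten [seq [seq restrict_rep S psi t | t <- enum (restrict_ball psi eps)]
                   | psi <- c].
exists (size c0); split.
  rewrite -size_c /c0; elim: (c) => //= psi c' IH.
  by rewrite size_cat size_map -cardE mulSn leq_add // card_restrict_ball.
exists c0; split=> //; split.
  move=> _ /flattenP [_ /mapP [psi c_psi ->]] /mapP [t _ ->].
  by apply: restrict_rep_smap => //; exact: c_smap.
move=> phi S_phi; have [psi c_psi le_eps] := cover phi S_phi.
have phi_ball : restrictF phi \in restrict_ball psi eps.
  rewrite inE; apply/forallP => i; rewrite !ffunE.
  by apply: le_trans le_eps; apply: ppd_dist_le_distF; exact: mem_nth.
exists (restrict_rep S psi (restrictF phi)).
  apply/flattenP; exists [seq restrict_rep S psi t | t <- enum (restrict_ball psi eps)].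
    by apply/mapP; exists psi.
  by apply/mapP; exists (restrictF phi); rewrite ?mem_enum.
by apply: distF_le0; rewrite (restrict_repP psi (ex_intro _ phi (conj S_phi erefl))).2.
Qed.

Lemma Ncov0_le S eps : (forall phi, S phi -> is_smap mu E phi) ->
  (Ncov mu E F S 0 <= Ncov mu E F S eps * (ball_count eps)%:R%:E)%E.
Proof.
move=> S_smap; set M := ball_count eps.
have M_gt0 : 0 < M%:R :> R by rewrite ltr0n !expn_gt0.
suff : (Ncov mu E F S 0 * (M%:R^-1)%:E <= Ncov mu E F S eps)%E.
  move/(lee_wpmul2r (_ : (0 <= M%:R%:E)%E)); rewrite -muleA -EFinM mulVf ?gt_eqF //.
  by rewrite mule1; apply; rewrite lee_fin ltW.
apply: le_ereal_inf_tmp => _ [K /(covers_refine S_smap) [k [le_k cov_k]] <-].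
have : (Ncov mu E F S 0 <= (K * M)%:R%:E)%E.
  apply: le_trans (_ : (k%:R%:E <= _)%E); first by apply: ereal_inf_lbound; exists k.
  by rewrite lee_fin ler_nat.
move/(lee_wpmul2r (_ : (0 <= (M%:R^-1)%:E)%E)).
by rewrite -EFinM natrM mulrK ?unitfE ?gt_eqF //; apply; rewrite lee_fin invr_ge0 ltW.
Qed.

Lemma ln_ball_count_le eps : (2 <= n)%N -> 0 <= eps ->
  ln (ball_count eps)%:R <= 3 * (size F)%:R * eps * (n%:R * ln n%:R).
Proof.
move=> n_ge2 eps_ge0; set L := Num.truncn (eps * n%:R).
have n_pos : (0 < n)%N by apply: leq_trans n_ge2.
have n_gt0 : 0 < n%:R :> R by rewrite ltr0n.
have L_le : L%:R <= eps * n%:R :> R by rewrite truncn_le mulr_ge0 // ltW.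
have ln_base : ln ((n * n.+1).+1)%:R <= 3 * ln n%:R :> R.
  rewrite -[3]/(3%:R) mulr_natl -lnXn // -natrX ler_ln ?posrE ?ltr0n ?expn_gt0 ?n_pos //.
  by rewrite ler_nat; nia.
rewrite /ball_count -expnM natrX lnXn ?ltr0n // -[ln _ *+ _]mulr_natl natrM -/L.
have -> : 3 * (size F)%:R * eps * (n%:R * ln n%:R) =
    eps * n%:R * (size F)%:R * (3 * ln n%:R) by ring.
apply: ler_pM; rewrite ?mulr_ge0 ?ler0n ?ln_ge0 ?ler1n //.
by apply: ler_pM; rewrite ?ler0n.
Qed.

End Covering.


Section EntropyApproximation.
Variables (R : realType) (dd : measure_display) (T : measurableType dd).
Variables (mu : probability T R) (E : T -> T -> Prop) (F : seq (parmap T)).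

Lemma le_upto_sterm m delta eps n : 0 < eps ->
  le_upto (3 * (size F)%:R * eps)
    (sterm mu E F m delta eps n) (sterm mu E F m delta 0 n).
Proof.
move=> eps_gt0; rewrite /sterm; set w := (n%:R * ln (n%:R : R))^-1.
set S := SA mu E F m delta (n := n).
have S_smap phi : S phi -> is_smap mu E phi by case.
have w_ge0 : 0 <= w.
  rewrite /w invr_ge0; have [n0|n_pos] := posnP n; first by rewrite n0 mul0r.
  by rewrite mulr_ge0 ?ler0n // ln_ge0 // ler1n.
split.
  apply: lee_wpmul2l; first by rewrite lee_fin.
  by apply: lee_elog; [exact: Ncov_ge0 | exact: Ncov_le_radius (ltW eps_gt0)].
have [n_lt2|n_ge2] := ltnP n 2.
  have -> : w = 0.
    rewrite /w; have [->|->] : n = 0%N \/ n = 1%N by lia.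
      by rewrite mul0r invr0.
    by rewrite ln1 mulr0 invr0.
  by rewrite !mul0e add0e lee_fin !mulr_ge0 ?ler0n // ltW.
have n_gt0 : 0 < n%:R :> R by rewrite ltr0n; apply: leq_trans n_ge2.
have nlnn_gt0 : 0 < n%:R * ln (n%:R : R) by rewrite mulr_gt0 // ln_gt0 // ltr1n.
have M_gt0 : 0 < (ball_count F n eps)%:R :> R by rewrite ltr0n !expn_gt0.
have Ncov0_bound : (w%:E * elog (Ncov mu E F S 0) <=
    w%:E * elog (Ncov mu E F S eps * (ball_count F n eps)%:R%:E))%E.
  apply: lee_wpmul2l; first by rewrite lee_fin.
  by apply: lee_elog; [exact: Ncov_ge0 | exact: Ncov0_le].
apply: le_trans Ncov0_bound _.
rewrite elogMr ?Ncov_ge0 // muleDr ?fin_num_adde_defl // leeD2l // -EFinM lee_fin.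
rewrite mulrC ler_pdivrMr //; apply: ln_ball_count_le => //; exact: ltW.
Qed.

Definition entropy_with (A : (\bar R)^nat -> \bar R) (eps : R) : \bar R :=
  ereal_inf [set ereal_inf [set A (sterm mu E F m delta eps)
                           | delta in [set delta : R | 0 < delta]]
            | m in [set: nat]].

Lemma entropy_with_cvg (A : (\bar R)^nat -> \bar R) :
  (forall u v c, (forall k, le_upto c (u k) (v k)) -> le_upto c (A u) (A v)) ->
  entropy_with A eps @[eps --> 0^'+] --> entropy_with A 0.
Proof.
move=> A_upto; apply: (@cvg_at_right0_le_upto _ _ _ (3 * (size F)%:R)).
  by rewrite mulr_ge0 ?ler0n.
move=> eps eps_gt0; apply: le_upto_ereal_inf => m; apply: le_upto_ereal_inf => delta.
by apply: A_upto => n; exact: le_upto_sterm.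
Qed.

End EntropyApproximation.

Unset Implicit Arguments.

Theorem mainTheorem10 (R : realType) (d : measure_display) (T : measurableType d)
  (mu : probability T R) (E : T -> T -> Prop)
  (hT : std_borel R T) (hE : cber E) (hpmp : pmp mu E)
  (F : seq (parmap T)) (hF : forall s, s \in F -> in_pgrp mu E s) :
  s_eps mu E F eps @[eps --> 0^'+] --> s_ent mu E F /\
  lower_s_eps mu E F eps @[eps --> 0^'+] --> lower_s_ent mu E F /\
  (forall om : set_system nat, UltraFilter om -> nonprincipal om ->
     s_omega_eps mu E om F eps @[eps --> 0^'+] --> s_omega_ent mu E om F).
Proof.
(* The comparison of covering numbers is purely combinatorial. *)
split; first exact: (@entropy_with_cvg _ _ _ mu E F _ (@le_upto_limn_esup R)).
split; first exact: (@entropy_with_cvg _ _ _ mu E F _ (@le_upto_limn_einf R)).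
move=> om omU _.
exact: (@entropy_with_cvg _ _ _ mu E F _ (@le_upto_ultra_lim R om omU)).
Qed.
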